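(* Let $X$ be a set and let $\mathrm{SGD}\langle X\rangle$ be the subalgebra of the free differential Poisson algebra $\mathrm{PoisDer}\langle X,d\rangle$ generated by $X$ with respect to the operations $[u,v]=\{u,v\}$ and $u\circ v=u\,d(v)$ (this is the free algebra of the variety generated by special GD-algebras). Then $\mathrm{SGD}\langle X\rangle$ coincides with the linear span of all differential Poisson monomials in $X$ (expressions built from elements of $X$ using $d$, the commutative product and the bracket) of weight $-1$.
   Context: A Poisson algebra has an associative commutative product and a Lie bracket $\{\cdot,\cdot\}$ satisfying $\{x,yz\}=\{x,y\}z+y\{x,z\}$; $\mathrm{PoisDer}\langle X,d\rangle$ is the free Poisson algebra generated by $X$ with a derivation $d$ of both operations. The weight of differential Poisson monomials is defined by $\mathrm{wt}(x)=-1$ for $x\in X$, $\mathrm{wt}(d(u))=\mathrm{wt}(u)+1$, $\mathrm{wt}(\{u,v\})=\mathrm{wt}(u)+\mathrm{wt}(v)+1$, $\mathrm{wt}(uv)=\mathrm{wt}(u)+\mathrm{wt}(v)$ (well defined since the Poisson identities are homogeneous for this weight). A GD-algebra is special if it embeds into a differential Poisson algebra with $[u,v]=\{u,v\}$ and $u\circ v=u\,d(v)$. *)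

From HB Require Import structures.
From mathcomp Require Import all_boot all_order all_algebra.
Set Implicit Arguments. Unset Strict Implicit. Unset Printing Implicit Defensive.
Import Order.TTheory GRing.Theory Num.Theory.
Local Open Scope ring_scope.

Record dPoisson (K : fieldType) := DPoisson {
  dp_car :> lmodType K;
  dp_mul : dp_car -> dp_car -> dp_car;
  dp_br  : dp_car -> dp_car -> dp_car;
  dp_d   : dp_car -> dp_car;
  dp_mul_linl : forall (a : K) x y z,
      dp_mul (a *: x + y) z = a *: dp_mul x z + dp_mul y z;
  dp_mulC : forall x y, dp_mul x y = dp_mul y x;
  dp_mulA : forall x y z, dp_mul x (dp_mul y z) = dp_mul (dp_mul x y) z;
  dp_br_linl : forall (a : K) x y z,
      dp_br (a *: x + y) z = a *: dp_br x z + dp_br y z;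
  dp_br_linr : forall (a : K) x y z,
      dp_br z (a *: x + y) = a *: dp_br z x + dp_br z y;
  dp_br_alt : forall x, dp_br x x = 0;
  dp_jacobi : forall x y z,
      dp_br x (dp_br y z) + dp_br y (dp_br z x) + dp_br z (dp_br x y) = 0;
  dp_leibniz : forall x y z,
      dp_br x (dp_mul y z) = dp_mul (dp_br x y) z + dp_mul y (dp_br x z);
  dp_d_lin : forall (a : K) x y, dp_d (a *: x + y) = a *: dp_d x + dp_d y;
  dp_d_mul : forall x y, dp_d (dp_mul x y) = dp_mul (dp_d x) y + dp_mul x (dp_d y);
  dp_d_br : forall x y, dp_d (dp_br x y) = dp_br (dp_d x) y + dp_br x (dp_d y)
}.

Inductive dterm (K : fieldType) (X : Type) : Type :=
  | TVar of X
  | TZero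
  | TAdd of dterm K X & dterm K X
  | TScale of K & dterm K X
  | TMul of dterm K X & dterm K X
  | TBr of dterm K X & dterm K X
  | TD of dterm K X.

Fixpoint deval (K : fieldType) (X : Type) (A : dPoisson K) (v : X -> A)
    (t : dterm K X) : A :=
  match t with
  | TVar x => v x
  | TZero => 0
  | TAdd s u => deval v s + deval v u
  | TScale a s => a *: deval v s
  | TMul s u => dp_mul (deval v s) (deval v u)
  | TBr s u => dp_br (deval v s) (deval v u)
  | TD s => dp_d (deval v s)
  end.

(* Equality in the free differential Poisson algebra PoisDer<X,d>:
   two terms denote the same element iff they agree in every differential
   Poisson algebra under every valuation of X (universal property). *)
Definition poisder_eq (K : fieldType) (X : Type) (t s : dterm K X) : Prop :=
  forall (A : dPoisson K) (v : X -> A), deval v t = deval v s.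

Inductive dmon (X : Type) : Type :=
  | MVar of X
  | MMul of dmon X & dmon X
  | MBr of dmon X & dmon X
  | MD of dmon X.

Fixpoint wt (X : Type) (m : dmon X) : int :=
  match m with
  | MVar _ => -1
  | MMul a b => wt a + wt b
  | MBr a b => wt a + wt b + 1
  | MD a => wt a + 1
  end.

Fixpoint mon_term (K : fieldType) (X : Type) (m : dmon X) : dterm K X :=
  match m with
  | MVar x => TVar K x
  | MMul a b => TMul (mon_term K a) (mon_term K b)
  | MBr a b => TBr (mon_term K a) (mon_term K b)
  | MD a => TD (mon_term K a)
  end.

Fixpoint lincomb (K : fieldType) (X : Type) (s : seq (K * dmon X)) : dterm K X :=
  match s with
  | [::] => TZero K X
  | (c, m) :: s' => TAdd (TScale c (mon_term K m)) (lincomb s')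
  end.

Inductive gdterm (K : fieldType) (X : Type) : Type :=
  | GVar of X
  | GZero
  | GAdd of gdterm K X & gdterm K X
  | GScale of K & gdterm K X
  | GBrk of gdterm K X & gdterm K X
  | GCirc of gdterm K X & gdterm K X.

Fixpoint gd_term (K : fieldType) (X : Type) (g : gdterm K X) : dterm K X :=
  match g with
  | GVar x => TVar K x
  | GZero => TZero K X
  | GAdd a b => TAdd (gd_term a) (gd_term b)
  | GScale c a => TScale c (gd_term a)
  | GBrk a b => TBr (gd_term a) (gd_term b)
  | GCirc a b => TMul (gd_term a) (TD (gd_term b))
  end.

Definition in_SGD (K : fieldType) (X : Type) (t : dterm K X) : Prop :=
  exists g : gdterm K X, poisder_eq t (gd_term g).

Definition in_wt_span (K : fieldType) (X : Type) (t : dterm K X) : Prop :=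
  exists s : seq (K * dmon X),
    all (fun cm => wt cm.2 == -1) s /\ poisder_eq t (lincomb s).

From mathcomp Require Import all_boot all_order all_algebra.
From mathcomp Require Import zify.
Set Implicit Arguments. Unset Strict Implicit. Unset Printing Implicit Defensive.
Import GRing.Theory.
Local Open Scope ring_scope.

(* Let P_w be the span of the monomials of
   weight w.  Since wt is additive, P_w1 P_w2 <= P_(w1+w2),
   {P_w1, P_w2} <= P_(w1+w2+1) and d(P_w) <= P_(w+1); hence P_(-1) contains X
   and is closed under [u,v] = {u,v} and u o v = u d(v), so it contains SGD.

   Write S = SGD<X> and define levels
   L_0 = S and L_(n+1) = {t | t S <= L_n}, i.e. t s_1 ... s_n lies in S for
   all s_i in S.  Then L_(a+1) L_b <= L_(a+b), d(L_k) <= L_(k+1) (because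
   s d(u) = s o u) and {L_a, L_b} <= L_(a+b) (Leibniz rule).  Let W_w be the
   span of products of elements of levels k_i with sum (k_i - 1) = w.  Every
   monomial of weight w lies in W_w (W is graded-closed under products, d and
   the bracket) and W_w <= L_(w+1) whenever w >= -1; for w = -1 this gives
   that weight -1 monomials lie in L_0 = S. *)

(* Additivity and homogeneity of a map satisfying f (a x + y) = a f x + f y;
   the axioms of dPoisson state linearity in this combined form. *)
Section LinearityCondition.
Variables (R : pzRingType) (U V : lmodType R) (f : U -> V).
Hypothesis f_lin : forall a x y, f (a *: x + y) = a *: f x + f y.

Lemma lin0 : f 0 = 0.
Proof.
have := f_lin 1 0 0; rewrite !scale1r addr0.
by move=> /(congr1 (fun y => y - f 0)); rewrite subrr addrK => /esym.
Qed.

Lemma linD x y : f (x + y) = f x + f y.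
Proof. by have := f_lin 1 x y; rewrite !scale1r. Qed.

Lemma linZ a x : f (a *: x) = a *: f x.
Proof. by have := f_lin a x 0; rewrite !addr0 lin0 addr0. Qed.

End LinearityCondition.

Section DPoissonLaws.
Variables (K : fieldType) (A : dPoisson K).
Implicit Types x y z : A.

Let mul_linl z a x y : dp_mul (a *: x + y) z = a *: dp_mul x z + dp_mul y z.
Proof. exact: dp_mul_linl. Qed.
Let br_linl z a x y : dp_br (a *: x + y) z = a *: dp_br x z + dp_br y z.
Proof. exact: dp_br_linl. Qed.
Let br_linr z a x y : dp_br z (a *: x + y) = a *: dp_br z x + dp_br z y.
Proof. exact: dp_br_linr. Qed.

Lemma mul_linr z a x y : dp_mul z (a *: x + y) = a *: dp_mul z x + dp_mul z y.
Proof. by rewrite dp_mulC mul_linl !(dp_mulC z). Qed.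

Lemma mulDl x y z : dp_mul (x + y) z = dp_mul x z + dp_mul y z.
Proof. exact: (linD (f := fun x => dp_mul x z) (mul_linl z)). Qed.
Lemma mulZl a x z : dp_mul (a *: x) z = a *: dp_mul x z.
Proof. exact: (linZ (f := fun x => dp_mul x z) (mul_linl z)). Qed.
Lemma mulZr a x z : dp_mul z (a *: x) = a *: dp_mul z x.
Proof. exact: (linZ (f := dp_mul z) (mul_linr z)). Qed.

Lemma brDl x y z : dp_br (x + y) z = dp_br x z + dp_br y z.
Proof. exact: (linD (f := fun x => dp_br x z) (br_linl z)). Qed.
Lemma brDr x y z : dp_br z (x + y) = dp_br z x + dp_br z y.
Proof. exact: (linD (f := dp_br z) (br_linr z)). Qed.

Lemma brC x y : dp_br x y = (-1) *: dp_br y x.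
Proof.
have := dp_br_alt (x + y); rewrite brDl !brDr !dp_br_alt add0r addr0 => H.
by rewrite scaleN1r; apply/eqP; rewrite -addr_eq0 H.
Qed.

Lemma leibniz_l x y z :
  dp_br (dp_mul x y) z = dp_mul (dp_br x z) y + dp_mul x (dp_br y z).
Proof.
rewrite brC dp_leibniz scalerDr -mulZl -mulZr -!brC.
by rewrite addrC dp_mulC.
Qed.

Lemma d0 : dp_d (0 : A) = 0.
Proof. exact: (lin0 (f := @dp_d _ A) (@dp_d_lin _ A)). Qed.
Lemma dD x y : dp_d (x + y) = dp_d x + dp_d y.
Proof. exact: (linD (f := @dp_d _ A) (@dp_d_lin _ A)). Qed.
Lemma dZ a x : dp_d (a *: x) = a *: dp_d x.
Proof. exact: (linZ (f := @dp_d _ A) (@dp_d_lin _ A)). Qed.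

End DPoissonLaws.

Section SpanOfWeight.
Variables (K : fieldType) (X : Type).
Notation term := (dterm K X).
Notation coefmon := (K * dmon X)%type.
Implicit Types (t u : term) (s : seq coefmon).

Definition in_wspan (w : int) t : Prop :=
  exists s, all (fun cm => wt cm.2 == w) s /\ poisder_eq t (lincomb s).

Definition lc_prod (op : dmon X -> dmon X -> dmon X) s1 s2 : seq coefmon :=
  [seq (a.1 * b.1, op a.2 b.2) | a <- s1, b <- s2].

Section Evaluation.
Variables (A : dPoisson K) (v : X -> A).

Lemma lincomb_cat s1 s2 :
  deval v (lincomb (s1 ++ s2)) = deval v (lincomb s1) + deval v (lincomb s2).
Proof. by elim: s1 => [|[c m] s IH] /=; rewrite ?add0r // IH addrA. Qed.

Lemma lincomb_scale a s :
  deval v (lincomb [seq (a * cm.1, cm.2) | cm <- s]) = a *: deval v (lincomb s).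
Proof.
by elim: s => [|[c m] s IH] /=; rewrite ?scaler0 // IH scalerDr scalerA.
Qed.

Lemma lincomb_d s :
  deval v (lincomb [seq (cm.1, MD cm.2) | cm <- s]) = dp_d (deval v (lincomb s)).
Proof.
by elim: s => [|[c m] s IH] /=; rewrite ?d0 // IH dD dZ.
Qed.

Lemma lincomb_prod (B : A -> A -> A) op s1 s2 :
  (forall a x y z, B (a *: x + y) z = a *: B x z + B y z) ->
  (forall a x y z, B z (a *: x + y) = a *: B z x + B z y) ->
  (forall m1 m2, deval v (mon_term K (op m1 m2)) =
                 B (deval v (mon_term K m1)) (deval v (mon_term K m2))) ->
  deval v (lincomb (lc_prod op s1 s2)) =
  B (deval v (lincomb s1)) (deval v (lincomb s2)).
Proof.
move=> linl linr Hop.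
have {}linl y a x1 x2 := linl a x1 x2 y; have {}linr x a y1 y2 := linr a y1 y2 x.
have B0l y : B 0 y = 0 := lin0 (f := B^~ y) (linl y).
have BDl x1 x2 y : B (x1 + x2) y = B x1 y + B x2 y := linD (f := B^~ y) (linl y) _ _.
have BZl a x y : B (a *: x) y = a *: B x y := linZ (f := B^~ y) (linl y) _ _.
have B0r x : B x 0 = 0 := lin0 (f := B x) (linr x).
have BDr x y1 y2 : B x (y1 + y2) = B x y1 + B x y2 := linD (f := B x) (linr x) _ _.
have BZr a x y : B x (a *: y) = a *: B x y := linZ (f := B x) (linr x) _ _.
elim: s1 => [|[c m] s IH] /=; first by rewrite B0l.
rewrite /lc_prod allpairs_cons lincomb_cat -/(lc_prod op s s2) IH BDl BZl.
congr (_ + _).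
elim: s2 {IH} => [|[c' m'] s2 IH2] /=; first by rewrite B0r scaler0.
by rewrite IH2 Hop BDr !BZr scalerDr scalerA.
Qed.

End Evaluation.

Lemma wspan_eq w t u : poisder_eq t u -> in_wspan w t -> in_wspan w u.
Proof. by move=> E [s [Ws Es]]; exists s; split=> // A v; rewrite -E. Qed.

Lemma wspan_w w w' t : in_wspan w t -> w = w' -> in_wspan w' t.
Proof. by move=> H <-. Qed.

Lemma wspan_var (x : X) : in_wspan (-1) (TVar K x).
Proof. by exists [:: (1, MVar x)]; split=> // A v /=; rewrite scale1r addr0. Qed.

Lemma wspan_zero w : in_wspan w (TZero K X).
Proof. by exists [::]. Qed.

Lemma wspan_add w t u : in_wspan w t -> in_wspan w u -> in_wspan w (TAdd t u).
Proof.
move=> [s1 [W1 E1]] [s2 [W2 E2]]; exists (s1 ++ s2).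
by rewrite all_cat W1 W2; split=> // A v /=; rewrite lincomb_cat E1 E2.
Qed.

Lemma wspan_scale w a t : in_wspan w t -> in_wspan w (TScale a t).
Proof.
move=> [s [W E]]; exists [seq (a * cm.1, cm.2) | cm <- s].
by rewrite all_map; split=> // A v /=; rewrite lincomb_scale E.
Qed.

Lemma wspan_d w t : in_wspan w t -> in_wspan (w + 1) (TD t).
Proof.
move=> [s [W E]]; exists [seq (cm.1, MD cm.2) | cm <- s]; split.
  by rewrite all_map; apply: sub_all W => cm /eqP /= ->.
by move=> A v /=; rewrite lincomb_d E.
Qed.

Lemma all_wt_prod op w1 w2 w s1 s2 :
  (forall m1 m2, wt m1 = w1 -> wt m2 = w2 -> wt (op m1 m2) = w) ->
  all (fun cm => wt cm.2 == w1) s1 -> all (fun cm => wt cm.2 == w2) s2 ->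
  all (fun cm => wt cm.2 == w) (lc_prod op s1 s2).
Proof.
move=> Hop; elim: s1 => //= a s1 IH /andP [/eqP Wa W1] W2.
rewrite /lc_prod allpairs_cons all_cat all_map -/(lc_prod op s1 s2) IH // andbT.
by apply: sub_all W2 => b /eqP Wb /=; rewrite Hop.
Qed.

Lemma wspan_mul w1 w2 t u :
  in_wspan w1 t -> in_wspan w2 u -> in_wspan (w1 + w2) (TMul t u).
Proof.
move=> [s1 [W1 E1]] [s2 [W2 E2]]; exists (lc_prod (@MMul X) s1 s2); split.
  by apply: all_wt_prod W1 W2 => m1 m2 /= -> ->.
move=> A v /=; rewrite E1 E2 (lincomb_prod _ _ (@dp_mul_linl _ A)) //.
by move=> a x y z; rewrite mul_linr.
Qed.

Lemma wspan_br w1 w2 t u :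
  in_wspan w1 t -> in_wspan w2 u -> in_wspan (w1 + w2 + 1) (TBr t u).
Proof.
move=> [s1 [W1 E1]] [s2 [W2 E2]]; exists (lc_prod (@MBr X) s1 s2); split.
  by apply: all_wt_prod W1 W2 => m1 m2 /= -> ->.
move=> A v /=; rewrite E1 E2 (lincomb_prod _ _ (@dp_br_linl _ A)) //.
exact: dp_br_linr.
Qed.

Lemma gd_wspan (g : gdterm K X) : in_wspan (-1) (gd_term g).
Proof.
elim: g => [x||g1 H1 g2 H2|a g H|g1 H1 g2 H2|g1 H1 g2 H2] /=.
- exact: wspan_var.
- exact: wspan_zero.
- exact: wspan_add.
- exact: wspan_scale.
- by apply: wspan_w (wspan_br H1 H2) _; lia.
- by apply: wspan_w (wspan_mul H1 (wspan_d H2)) _; lia.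
Qed.

End SpanOfWeight.

Section Levels.
Variables (K : fieldType) (X : Type).
Notation term := (dterm K X).
Implicit Types t u s c e : term.

Lemma SGD_eq t u : poisder_eq t u -> in_SGD t -> in_SGD u.
Proof. by move=> E [g H]; exists g => A v; rewrite -E H. Qed.

Lemma SGD_var (x : X) : in_SGD (TVar K x).
Proof. by exists (GVar K x). Qed.

Lemma SGD_zero : in_SGD (TZero K X).
Proof. by exists (GZero K X). Qed.

Lemma SGD_add t u : in_SGD t -> in_SGD u -> in_SGD (TAdd t u).
Proof. by move=> [g H] [g' H']; exists (GAdd g g') => A v /=; rewrite H H'. Qed.

Lemma SGD_scale a t : in_SGD t -> in_SGD (TScale a t).
Proof. by move=> [g H]; exists (GScale a g) => A v /=; rewrite H. Qed.

Lemma SGD_br t u : in_SGD t -> in_SGD u -> in_SGD (TBr t u).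
Proof. by move=> [g H] [g' H']; exists (GBrk g g') => A v /=; rewrite H H'. Qed.

Lemma SGD_circ t u : in_SGD t -> in_SGD u -> in_SGD (TMul t (TD u)).
Proof. by move=> [g H] [g' H']; exists (GCirc g g') => A v /=; rewrite H H'. Qed.

Fixpoint level (n : nat) t : Prop :=
  if n is n'.+1 then forall s, in_SGD s -> level n' (TMul t s) else in_SGD t.

Lemma level_eq n t u : poisder_eq t u -> level n t -> level n u.
Proof.
elim: n t u => [|n IH] t u E /=; first exact: SGD_eq.
by move=> Ht s Hs; apply: IH (Ht s Hs) => A v /=; rewrite E.
Qed.

Lemma level_add n t u : level n t -> level n u -> level n (TAdd t u).
Proof.
elim: n t u => [|n IH] t u /=; first exact: SGD_add.
move=> Ht Hu s Hs; apply: (level_eq (t := TAdd (TMul t s) (TMul u s))).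
  by move=> A v /=; rewrite mulDl.
exact: IH (Ht s Hs) (Hu s Hs).
Qed.

Lemma level_scale n a t : level n t -> level n (TScale a t).
Proof.
elim: n t => [|n IH] t /=; first exact: SGD_scale.
move=> Ht s Hs; apply: (level_eq (t := TScale a (TMul t s))).
  by move=> A v /=; rewrite mulZl.
exact: IH (Ht s Hs).
Qed.

Lemma level_sub n t u : level n t -> level n u -> level n (TAdd t (TScale (-1) u)).
Proof. by move=> Ht Hu; apply: level_add Ht (level_scale _ Hu). Qed.

(* L_(a+1) L_b <= L_(a+b): feed the b arguments to e first. *)
Lemma level_mul a b c e : level a.+1 c -> level b e -> level (a + b) (TMul c e).
Proof.
elim: b e => [|b IH] e Hc He; first by rewrite addn0; exact: Hc.
rewrite addnS => s Hs; apply: (level_eq (t := TMul c (TMul e s))).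
  by move=> A v /=; rewrite dp_mulA.
exact: IH (He s Hs).
Qed.

Lemma level_mulC a b c e : level a c -> level b.+1 e -> level (a + b) (TMul c e).
Proof.
move=> Hc He; rewrite addnC; apply: (level_eq (t := TMul e c)).
  by move=> A v /=; rewrite dp_mulC.
exact: level_mul.
Qed.

(* d(SGD) <= L_1 since  s d(u) = s o u. *)
Lemma level_d_SGD u : in_SGD u -> level 1 (TD u).
Proof.
move=> Hu s Hs; apply: (@level_eq 0 (TMul s (TD u))).
  by move=> A v /=; rewrite dp_mulC.
exact: SGD_circ.
Qed.

(* d(L_k) <= L_(k+1), using  d(c) s = d(c s) - c d(s). *)
Lemma level_d k c : level k c -> level k.+1 (TD c).
Proof.
elim: k c => [|k IH] c; first exact: level_d_SGD.
move=> Hc s Hs; change (level k.+1 (TMul (TD c) s)).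
apply: (level_eq (t := TAdd (TD (TMul c s)) (TScale (-1) (TMul c (TD s))))).
  by move=> A v /=; rewrite dp_d_mul scaleN1r addrK.
apply: level_sub; first exact: IH (Hc s Hs).
by rewrite -[k.+1]addn1; apply: level_mul Hc (level_d_SGD Hs).
Qed.

(* {S, L_b} <= L_b, using  {s, e} s' = {s, e s'} - e {s, s'}. *)
Lemma level_br_SGD b s e : in_SGD s -> level b e -> level b (TBr s e).
Proof.
elim: b e => [|b IH] e Hs He; first exact: SGD_br.
move=> s' Hs'; change (level b (TMul (TBr s e) s')).
apply: (level_eq (t := TAdd (TBr s (TMul e s')) (TScale (-1) (TMul e (TBr s s'))))).
  by move=> A v /=; rewrite dp_leibniz scaleN1r addrK.
apply: level_sub; first exact: IH (He s' Hs').
exact: He (SGD_br Hs Hs').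
Qed.

Lemma level_SGD_br b s e : in_SGD s -> level b e -> level b (TBr e s).
Proof.
move=> Hs He; apply: (level_eq (t := TScale (-1) (TBr s e))).
  by move=> A v /=; rewrite -brC.
exact: level_scale (level_br_SGD Hs He).
Qed.

Lemma level_br a b c e : level a c -> level b e -> level (a + b) (TBr c e).
Proof.
move=> Hc; elim: b e => [|b IH] e He; first by rewrite addn0; exact: level_SGD_br.
rewrite addnS => s Hs; change (level (a + b) (TMul (TBr c e) s)).
apply: (level_eq (t := TAdd (TBr c (TMul e s)) (TScale (-1) (TMul e (TBr c s))))).
  by move=> A v /=; rewrite dp_leibniz scaleN1r addrK.
apply: level_sub; first exact: IH (He s Hs).
by rewrite addnC; apply: level_mul He (level_SGD_br Hs Hc).
Qed.

End Levels.

Section WeightGenerated.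
Variables (K : fieldType) (X : Type).
Notation term := (dterm K X).
Implicit Types t u e : term.

Inductive wgen : int -> term -> Prop :=
| wgen_level k t : level k t -> wgen (k%:Z - 1) t
| wgen_mul w1 w2 t1 t2 : wgen w1 t1 -> wgen w2 t2 -> wgen (w1 + w2) (TMul t1 t2)
| wgen_add w t1 t2 : wgen w t1 -> wgen w t2 -> wgen w (TAdd t1 t2)
| wgen_eq w t t' : wgen w t -> poisder_eq t t' -> wgen w t'.

Lemma wgen_w w w' t : wgen w t -> w = w' -> wgen w' t.
Proof. by move=> H <-. Qed.

Lemma wgen_mul_level w t : wgen w t ->
  forall (j : nat) e (n : nat), level j e -> j%:Z + w = n%:Z -> level n (TMul t e).
Proof.
elim=> {w t}.
- move=> [|k] t Hk j e n He E.
    case: j He E => [|j] He E; first by exfalso; lia.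
    by rewrite (_ : n = 0 + j)%N; [exact: level_mulC | lia].
  by rewrite (_ : n = k + j)%N; [exact: level_mul | lia].
- move=> w1 w2 t1 t2 _ IH1 _ IH2 j e n He E.
  case: (boolP (0 <= j%:Z + w2)) => h2.
    have H2 := IH2 j e (absz (j%:Z + w2)) He ltac:(lia).
    apply: (level_eq (t := TMul t1 (TMul t2 e))).
      by move=> A v /=; rewrite dp_mulA.
    by apply: IH1 H2 _; lia.
  have H1 := IH1 j e (absz (j%:Z + w1)) He ltac:(lia).
  apply: (level_eq (t := TMul t2 (TMul t1 e))).
    by move=> A v /=; rewrite !dp_mulA (dp_mulC (deval v t2)).
  by apply: IH2 H1 _; lia.
- move=> w t1 t2 _ IH1 _ IH2 j e n He E.
  apply: (level_eq (t := TAdd (TMul t1 e) (TMul t2 e))).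
    by move=> A v /=; rewrite mulDl.
  exact: level_add (IH1 _ _ _ He E) (IH2 _ _ _ He E).
- move=> w t t' _ IH E j e n He Ej; apply: level_eq (IH _ _ _ He Ej).
  by move=> A v /=; rewrite E.
Qed.

(* W_(n-1) <= L_n: in a product of weight >= -1 one factor has weight >= -1. *)
Lemma wgen_level_sub w t : wgen w t -> forall n : nat, w = n%:Z - 1 -> level n t.
Proof.
elim=> {w t}.
- by move=> k t Hk n E; rewrite (_ : n = k); [ | lia].
- move=> w1 w2 t1 t2 P1 IH1 P2 IH2 n E.
  case: (boolP (-1 <= w1)) => h1.
    have H1 := IH1 (absz (w1 + 1)) ltac:(lia).
    apply: (level_eq (t := TMul t2 t1)); first by move=> A v /=; rewrite dp_mulC.
    by apply: wgen_mul_level P2 _ _ _ H1 _; lia.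
  have H2 := IH2 (absz (w2 + 1)) ltac:(lia).
  by apply: wgen_mul_level P1 _ _ _ H2 _; lia.
- by move=> w t1 t2 _ IH1 _ IH2 n E; apply: level_add (IH1 n E) (IH2 n E).
- by move=> w t t' _ IH E n En; apply: level_eq E (IH n En).
Qed.

Lemma wgen_d w t : wgen w t -> wgen (w + 1) (TD t).
Proof.
elim=> {w t}.
- move=> k t Hk; apply: wgen_w (wgen_level (level_d Hk)) _; lia.
- move=> w1 w2 t1 t2 P1 H1 P2 H2.
  apply: (wgen_eq (t := TAdd (TMul (TD t1) t2) (TMul t1 (TD t2)))); last first.
    by move=> A v /=; rewrite dp_d_mul.
  apply: wgen_add; first by apply: wgen_w (wgen_mul H1 P2) _; lia.
  by apply: wgen_w (wgen_mul P1 H2) _; lia.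
- move=> w t1 t2 _ H1 _ H2.
  apply: (wgen_eq (t := TAdd (TD t1) (TD t2))); last by move=> A v /=; rewrite dD.
  exact: wgen_add.
- by move=> w t t' _ H E; apply: wgen_eq H _ => A v /=; rewrite E.
Qed.

Lemma wgen_br_level w1 t1 : wgen w1 t1 ->
  forall k t2, level k t2 -> wgen (w1 + k%:Z) (TBr t1 t2).
Proof.
elim=> {w1 t1}.
- move=> k1 t Hk k t2 H2; apply: wgen_w (wgen_level (level_br Hk H2)) _; lia.
- move=> w1 w2 t1 t1' P1 H1 P2 H2 k t2 Ht2.
  apply: (wgen_eq (t := TAdd (TMul (TBr t1 t2) t1') (TMul t1 (TBr t1' t2)))).
    apply: wgen_add; first by apply: wgen_w (wgen_mul (H1 _ _ Ht2) P2) _; lia.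
    by apply: wgen_w (wgen_mul P1 (H2 _ _ Ht2)) _; lia.
  by move=> A v /=; rewrite leibniz_l.
- move=> w t1 t1' _ H1 _ H2 k t2 Ht2.
  apply: (wgen_eq (t := TAdd (TBr t1 t2) (TBr t1' t2))); last by move=> A v /=; rewrite brDl.
  exact: wgen_add (H1 _ _ Ht2) (H2 _ _ Ht2).
- by move=> w t t' _ H E k t2 Ht2; apply: wgen_eq (H _ _ Ht2) _ => A v /=; rewrite E.
Qed.

Lemma wgen_br w2 t2 : wgen w2 t2 ->
  forall w1 t1, wgen w1 t1 -> wgen (w1 + w2 + 1) (TBr t1 t2).
Proof.
elim=> {w2 t2}.
- move=> k t Hk w1 t1 H1; apply: wgen_w (wgen_br_level H1 Hk) _; lia.
- move=> w1 w2 t1 t1' P1 H1 P2 H2 w t Ht.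
  apply: (wgen_eq (t := TAdd (TMul (TBr t t1) t1') (TMul t1 (TBr t t1')))).
    apply: wgen_add; first by apply: wgen_w (wgen_mul (H1 _ _ Ht) P2) _; lia.
    by apply: wgen_w (wgen_mul P1 (H2 _ _ Ht)) _; lia.
  by move=> A v /=; rewrite dp_leibniz.
- move=> w t1 t1' _ H1 _ H2 w' t Ht.
  apply: (wgen_eq (t := TAdd (TBr t t1) (TBr t t1'))); last by move=> A v /=; rewrite brDr.
  exact: wgen_add (H1 _ _ Ht) (H2 _ _ Ht).
- by move=> w t t' _ H E w' t2 Ht2; apply: wgen_eq (H _ _ Ht2) _ => A v /=; rewrite E.
Qed.

Lemma wgen_mon (m : dmon X) : wgen (wt m) (mon_term K m).
Proof.
elim: m => [x|a Ha b Hb|a Ha b Hb|a Ha] /=.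
- by apply: wgen_w (wgen_level (k := 0) (SGD_var K x)) _.
- exact: wgen_mul.
- exact: wgen_br.
- exact: wgen_d.
Qed.

Lemma lincomb_SGD (s : seq (K * dmon X)) :
  all (fun cm => wt cm.2 == -1) s -> in_SGD (lincomb s).
Proof.
elim: s => [|[c m] s IH] /=; first by move=> _; exact: SGD_zero.
move=> /andP [/eqP Wm Ws]; apply: SGD_add (IH Ws); apply: SGD_scale.
by apply: (wgen_level_sub (wgen_mon m) (n := 0)); rewrite Wm.
Qed.

End WeightGenerated.

Theorem mainTheorem16 (K : fieldType) (X : Type)
    (char0 : [pchar K] =i pred0) (t : dterm K X) :
  in_SGD t <-> in_wt_span t.
Proof.
split=> [[g Eg] | [s [Ws Es]]].
- by apply: wspan_eq (gd_wspan g) => A v; rewrite Eg.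
- by apply: SGD_eq (lincomb_SGD Ws) => A v; rewrite Es.
Qed.
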